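(* Let $n\ge1$, $\mathcal{X}$ the simplex in $\mathbb{R}^{n+1}$, $\theta$ a kernel, $\Phi$ a Lipschitz continuous smooth function on an open neighborhood of $\mathcal{X}$, and $\eta>0$. Let $x(t)$ be an interior solution of the inertial dynamics (ID) defined for all $t\ge0$, let $x^\omega$ be an $\omega$-limit point of $x(t)$ (i.e. $x(t_n)\to x^\omega$ for some $t_n\to\infty$), and let $U$ be a neighborhood of $x^\omega$ in $\mathcal{X}$. Then for every $T>0$ there exists an interval $J$ of length at least $T$ such that $x(t)\in U$ for all $t\in J$.
   Context: $\mathcal{X}=\{x\in\mathbb{R}^{n+1}:x_\alpha\ge0,\sum_\alpha x_\alpha=1\}$ with relative interior $\mathcal{X}^\circ$. A kernel is a $C^\infty$ function $\theta:[0,\infty)\to\mathbb{R}\cup\{+\infty\}$ with $\theta(x)<\infty$ for $x>0$, $\lim_{x\to0^+}\theta'(x)=-\infty$, $\theta''>0$, $\theta'''<0$ on $(0,\infty)$. With $\theta''_\alpha=\theta''(x_\alpha)$, $\theta'''_\alpha=\theta'''(x_\alpha)$, $\Theta''=(\sum_\beta1/\theta''_\beta)^{-1}$, $v_\alpha=\partial\Phi/\partial x_\alpha$, the inertial dynamics (ID) on $\mathcal{X}^\circ$ are $$\ddot x_\alpha=\frac{1}{\theta''_\alpha}\Big[v_\alpha-\sum_{\beta}\frac{\Theta''}{\theta''_\beta}v_\beta\Big]-\frac{1}{2\theta''_\alpha}\Big[\theta'''_\alpha\dot x_\alpha^2-\sum_\beta\frac{\Theta''}{\theta''_\beta}\theta'''_\beta\dot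 x_\beta^2\Big]-\eta\dot x_\alpha.$$ *)

From HB Require Import structures.
From mathcomp Require Import all_boot all_order all_algebra.
From mathcomp Require Import all_classical all_reals all_analysis.
Set Implicit Arguments. Unset Strict Implicit. Unset Printing Implicit Defensive.
Import Order.TTheory GRing.Theory Num.Theory.
Import numFieldNormedType.Exports.
Local Open Scope classical_set_scope.
Local Open Scope ring_scope.

Section Defs.
Variable R : realType.
Variable n : nat.
Notation vec := 'rV[R]_(n.+1).

Definition simplex : set vec :=
  [set x | (forall a, 0 <= x ord0 a) /\ \sum_a x ord0 a = 1].
Definition simplex_int : set vec :=
  [set x | (forall a, 0 < x ord0 a) /\ \sum_a x ord0 a = 1].

Definition dern (k : nat) (f : R -> R) : R -> R := iter k (@derive1 R R) f.

(* kernel: theta restricted to (0,oo) is real valued and C^oo there; its value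
   theta0 at 0 lies in R u {+oo} and theta is continuous at 0 from the right;
   theta' -> -oo at 0+, theta'' > 0, theta''' < 0 on (0,oo). *)
Definition is_kernel (theta : R -> R) (theta0 : \bar R) : Prop :=
  [/\ theta0 != -oo%E,
      (forall k x, 0 < x -> derivable (dern k theta) x 1),
      (fun x => (theta x)%:E) @ 0^'+ --> theta0,
      dern 1 theta @ 0^'+ --> -oo &
      (forall x, 0 < x -> 0 < dern 2 theta x) /\
      (forall x, 0 < x -> dern 3 theta x < 0)].

Definition coord_partial (a : 'I_n.+1) (f : vec -> R) : vec -> R :=
  fun y => 'D_(delta_mx ord0 a) f y.

Definition iter_partial (l : seq 'I_n.+1) (f : vec -> R) : vec -> R :=
  foldr coord_partial f l.

Definition Smooth_on_set (O : set vec) (f : vec -> R) : Prop :=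
  (forall l a y, O y -> derivable (iter_partial l f) y (delta_mx ord0 a)) /\
  (forall l, {within O, continuous (iter_partial l f)}).

Definition Lipschitz_on_set (O : set vec) (f : vec -> R) : Prop :=
  exists L : R, forall y z, O y -> O z -> `|f y - f z| <= L * `|y - z|.

Definition ID_rhs (theta : R -> R) (Phi : vec -> R) (eta : R)
  (x xd : vec) (a : 'I_n.+1) : R :=
  let th2 := fun b => dern 2 theta (x ord0 b) in
  let th3 := fun b => dern 3 theta (x ord0 b) in
  let Th2 := (\sum_b (th2 b)^-1)^-1 in
  let v := fun b => coord_partial b Phi x in
  (th2 a)^-1 * (v a - \sum_b Th2 / th2 b * v b)
  - (2 * th2 a)^-1 * (th3 a * (xd ord0 a) ^+ 2
                      - \sum_b Th2 / th2 b * th3 b * (xd ord0 b) ^+ 2)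
  - eta * xd ord0 a.

Definition interior_ID_solution (theta : R -> R) (Phi : vec -> R) (eta : R)
  (x : R -> vec) : Prop :=
  (forall t, 0 <= t -> simplex_int (x t)) /\
  (forall t, 0 < t -> derivable x t 1) /\
  (forall t, 0 < t -> derivable (derive1 x) t 1) /\
  (forall t a, 0 < t ->
     (derive1 (derive1 x) t) ord0 a = ID_rhs theta Phi eta (x t) (derive1 x t) a).

Definition omega_limit_point (x : R -> vec) (xw : vec) : Prop :=
  exists tn : nat -> R, tn @ \oo --> +oo /\ (x \o tn) @ \oo --> xw.

Definition nbhs_in_simplex (xw : vec) (U : set vec) : Prop :=
  exists V, nbhs xw V /\ V `&` simplex `<=` U.

End Defs.

From HB Require Import structures.
From mathcomp Require Import all_boot all_order all_algebra.
From mathcomp Require Import all_classical all_reals all_analysis.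
From mathcomp Require Import ring lra.
Import Order.TTheory GRing.Theory Num.Theory.
Import numFieldNormedType.Exports.
Local Open Scope classical_set_scope.
Local Open Scope ring_scope.

(* Along (ID) the energy E = 1/2 sum_a theta''(x_a) xdot_a^2 - Phi(x) satisfies
   E' = -eta sum_a theta''(x_a) xdot_a^2 <= 0, and E is bounded below since Phi is
   Lipschitz on the bounded simplex, so the drop E(s) - E(t) becomes arbitrarily small
   for large s. As theta''' < 0, theta''(x_a) >= theta''(1) on the simplex, so this drop
   dominates eta theta''(1) times the integral of xdot_a^2 over [s, t]; with AM-GM this
   gives, for every tau > 0,
     (x_a(t) - x_a(s))^2 <= tau / (eta theta''(1)) (E(s) - E(t)) + (t - s) / tau.
   Thus x eventually moves less than eps on every time window of length T, and such a
   window starting at a time t_n with x(t_n) close to x^omega is the interval. *)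

Section RealFunctions.
Context {R : realType}.
Implicit Types (f g df dg : R -> R) (s t : R).

Lemma ler0_is_derive_le {f df} {s t : R} : s <= t ->
  (forall u, s <= u <= t -> is_derive u 1 f (df u)) ->
  (forall u, s < u < t -> df u <= 0) -> f t <= f s.
Proof.
move=> st fd dfle0.
have cf : {within `[s, t], continuous f}.
  apply: continuous_in_subspaceT => u; rewrite inE /= in_itv /= => /fd [fu _].
  exact/differentiable_continuous/derivable1_diffP.
have fdo u : u \in `]s, t[ -> is_derive u 1 f (df u).
  by rewrite in_itv /= => /andP[su ut]; apply: fd; rewrite !ltW.
apply: (ler0_derive1_le_cc _ _ cf); rewrite ?in_itv /= ?lexx ?st //.
- by move=> u /fdo [].
- move=> u uin; rewrite derive1E; have [_ ->] := fdo u uin.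
  by apply: dfle0; move: uin; rewrite in_itv.
Qed.

Lemma sqr_increment_le {f df g dg} {K tau s t : R} :
  0 < K -> 0 < tau -> s <= t ->
  (forall u, s <= u <= t -> is_derive u 1 f (df u)) ->
  (forall u, s <= u <= t -> is_derive u 1 g (dg u)) ->
  (forall u, s < u < t -> K * df u ^+ 2 <= - dg u) ->
  (forall u, s < u < t -> (f u - f s) ^+ 2 <= 1) ->
  (f t - f s) ^+ 2 <= tau / K * (g s - g t) + (t - s) / tau.
Proof.
move=> K0 tau0 st fd gd dfg f1.
pose k := tau / K.
have k0 : 0 < k by exact: divr_gt0.
(* G is nonincreasing: its derivative is at most 2 d f' - tau f'^2 - 1/tau <= 0 with
   d = f - f s, by AM-GM and d^2 <= 1. *)
pose G := (f - cst (f s)) ^+ 2 + k \*: g - tau^-1 \*: id.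
pose dG u := 2 * (f u - f s) * df u + k * dg u - tau^-1.
suff : G t <= G s.
  rewrite /G !fctE /= subrr expr0n /= add0r /GRing.scale /=.
  have -> : (t - s) / tau = tau^-1 * t - tau^-1 * s by rewrite mulrC mulrBr.
  rewrite /k; lra.
apply: (ler0_is_derive_le (df := dG) st) => // u hu.
  apply: is_derive_eq; first exact: is_deriveB (is_deriveD (is_deriveX 2
    (is_deriveB (fd u hu) (is_derive_cst (f s) u 1))) (is_deriveZ k (gd u hu)))
    (is_deriveZ tau^-1 (is_derive_id u 1)).
  by rewrite /dG /= subr0 expr1 !fctE /GRing.scale /= mulr1.
have := dfg u hu; have := f1 u hu; rewrite /dG /k.
set d := f u - f s; set w := df u => d1 Kw.
have dg_le : tau / K * dg u <= - (tau * w ^+ 2).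
  have -> : - (tau * w ^+ 2) = tau / K * - (K * w ^+ 2).
    by field; exact: lt0r_neq0.
  by apply: ler_wpM2l; [exact: ltW | lra].
have amgm : 2 * d * w <= tau^-1 + tau * w ^+ 2.
  have sq0 : 0 <= tau^-1 * (tau * w - d) ^+ 2 by rewrite mulr_ge0 ?sqr_ge0 ?invr_ge0 ?ltW.
  have expand : tau^-1 * (tau * w - d) ^+ 2 = tau * w ^+ 2 - 2 * d * w + tau^-1 * d ^+ 2.
    by field; exact: lt0r_neq0.
  have : tau^-1 * d ^+ 2 <= tau^-1 by rewrite ler_piMr // invr_ge0 ltW.
  lra.
lra.
Qed.

Lemma nonincreasing_lbounded_cauchy {f} {a B : R} :
  (forall s t, a <= s -> s <= t -> f t <= f s) ->
  (forall t, a <= t -> B <= f t) ->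
  forall gam, 0 < gam ->
  exists2 S, a <= S & forall s t, S <= s -> s <= t -> f s - f t <= gam.
Proof.
move=> fdec fB gam gam0.
have finf : has_inf (f @` [set t | a <= t]).
  split; first by exists (f a); exists a => /=.
  by exists B => _ [t ta <-]; exact: fB.
have [_ [S aS <-] fS] := inf_adherent gam0 finf.
exists S => // s t Ss st.
have aS' : a <= s := le_trans aS Ss.
have : inf (f @` [set t | a <= t]) <= f t.
  by apply: ge_inf; [case: finf | exists t => //; exact: le_trans st].
have := fdec _ _ aS Ss; lra.
Qed.

Lemma is_derive0_of_small_increments (V : normedModType R) (g : R -> V) t :
  (forall eps, 0 < eps -> \forall h \near 0^', `|g (h + t) - g t| <= eps * `|h|) ->
  is_derive t 1 g 0.
Proof.
move=> small.
have quot0 : (fun h => h^-1 *: ((g \o shift t) (h *: 1) - g t)) @ 0^' --> (0 : V).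
  apply/cvgrPdist_le => eps eps0; near=> h.
  have h0 : h != 0 by near: h; exact: nbhs_dnbhs_neq.
  have gh : `|g (h + t) - g t| <= eps * `|h| by near: h; exact: small.
  rewrite sub0r normrN normrZ normfV /= -[h *: 1]/(h * 1) mulr1.
  by rewrite ler_pdivrMl ?normr_gt0 // mulrC.
by split; [apply/cvg_ex; exists 0 | exact: cvg_lim].
Unshelve. all: by end_near.
Qed.

Lemma increment_le_near (V : normedModType R) (x : R -> V) t : derivable x t 1 ->
  \forall h \near 0^', `|x (h + t) - x t| <= (`|'D_1 x t| + 1) * `|h|.
Proof.
move=> /cvgrPdist_le /(_ 1 ltr01) near1; near=> h.
have h0 : h != 0 by near: h; exact: nbhs_dnbhs_neq.
have /= q1 : `|'D_1 x t - h^-1 *: (x (h *: 1 + t) - x t)| <= 1 by near: h.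
rewrite -[h *: 1]/(h * 1) mulr1 in q1.
set q := h^-1 *: _ in q1.
have -> : x (h + t) - x t = h *: q by rewrite /q scalerA mulfV // scale1r.
rewrite normrZ mulrC ler_wpM2r // -(subrK ('D_1 x t) q) addrC.
by apply: le_trans (ler_normD _ _) _; rewrite lerD // distrC.
Unshelve. all: by end_near.
Qed.

Lemma is_derive_entry {p q : nat} {x : R -> 'M[R]_(p, q)} {t : R} i j :
  derivable x t 1 -> is_derive t 1 (fun s => x s i j) ('D_1 x t i j).
Proof.
move=> dx; have /derivable_mxP /(_ i j) dxij := dx.
by split => //; rewrite derive_mx // mxE.
Qed.
End RealFunctions.

Section RowCalculus.
Context {R : realType} {m : nat}.
Notation vec := 'rV[R]_m.
Notation e a := (delta_mx 0 a : vec).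
Implicit Types (y z w v d : vec).

Lemma mx_normr_entry_le d k : `|d 0 k| <= `|d|.
Proof.
rewrite [leRHS]/Num.Def.normr /= mx_normrE.
by apply: le_trans; last exact: (le_bigmax _ _ (0, k)).
Qed.

Lemma mx_normr_le d r : 0 <= r -> (forall k, `|d 0 k| <= r) -> `|d| <= r.
Proof.
move=> r0 dr; rewrite [leLHS]/Num.Def.normr /= mx_normrE.
by apply: bigmax_le => // -[i k] _ /=; rewrite [i]ord1.
Qed.

Lemma sum_normr_entries_le d : \sum_k `|d 0 k| <= m%:R * `|d|.
Proof.
apply: le_trans (ler_sum _ (fun k _ => mx_normr_entry_le d k)) _.
by rewrite sumr_const card_ord mulr_natl.
Qed.

Lemma sumr_ord_ltS (V : zmodType) (F : 'I_m -> V) (k : 'I_m) :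
  \sum_(i < m | (i < k.+1)%N) F i = \sum_(i < m | (i < k)%N) F i + F k.
Proof.
rewrite (bigD1 k) //= addrC; congr (_ + _).
apply: eq_bigl => i; rewrite ltnS leq_eqVlt -val_eqE /=.
by case: ltngtP.
Qed.

Definition coord_prefix d (j : nat) : vec := \sum_(k < m | (k < j)%N) d 0 k *: e k.

Lemma coord_prefix_entry d j k : coord_prefix d j 0 k = if (k < j)%N then d 0 k else 0.
Proof.
rewrite summxE; under eq_bigr do rewrite !mxE eqxx /=.
rewrite big_mkcond /= (bigD1 k) //= big1 ?addr0 => [|i ik].
  by rewrite eqxx mulr1; case: (k < j)%N.
by rewrite eq_sym (negbTE ik) mulr0; case: (i < j)%N.
Qed.

Lemma coord_prefixS d (k : 'I_m) : coord_prefix d k.+1 = coord_prefix d k + d 0 k *: e k.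
Proof. exact: sumr_ord_ltS. Qed.

Lemma coord_prefix_full d : coord_prefix d m = d.
Proof.
rewrite [RHS]row_sum_delta; apply: eq_bigl => k; exact: ltn_ord.
Qed.

Lemma normr_coord_prefix_shift_le d (k : 'I_m) r : `|r| <= `|d 0 k| ->
  `|coord_prefix d k + r *: e k| <= `|d|.
Proof.
move=> rk; apply: mx_normr_le => // i; rewrite !mxE coord_prefix_entry eqxx /=.
case: (eqVneq k i) => [<-|ki]; first by rewrite ltnn mulr1 add0r (le_trans rk) ?mx_normr_entry_le.
by rewrite mulr0 addr0; case: ifP; rewrite ?normr0 ?mx_normr_entry_le.
Qed.

(* Smooth_on_set only provides continuous partial derivatives, so the chain rule for
   Phi \o x is derived here from the mean value theorem on coordinate segments. *)
Section Linearization.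
Variable Phi : vec -> R.

Lemma is_derive_line w v r : derivable Phi (w + r *: v) v ->
  is_derive r 1 (fun s => Phi (w + s *: v)) ('D_v Phi (w + r *: v)).
Proof.
move=> dPhi.
have quotE : (fun h : R => h^-1 *: (((fun s => Phi (w + s *: v)) \o shift r) (h *: 1)
               - Phi (w + r *: v)))
    = (fun h : R => h^-1 *: ((Phi \o shift (w + r *: v)) (h *: v) - Phi (w + r *: v))).
  by apply/funext => h /=; rewrite /shift /= scaler1 scalerDl addrCA.
by split; rewrite /derivable /derive quotE.
Qed.

Lemma mvt_line {w v s} :
  (forall r, `|r| <= `|s| -> derivable Phi (w + r *: v) v) ->
  exists2 c, `|c| <= `|s| & Phi (w + s *: v) - Phi w = s * 'D_v Phi (w + c *: v).
Proof.
move=> dPhi.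
pose g (r : R) := Phi (w + r *: v).
pose dg (r : R) := 'D_v Phi (w + r *: v).
have gd (r : R) : `|r| <= `|s| -> is_derive r (1 : R) g (dg r).
  by move=> rs; exact/is_derive_line/dPhi.
have inside (a b r : R) : `|a| <= `|s| -> `|b| <= `|s| -> a <= r <= b -> `|r| <= `|s|.
  rewrite !ler_norml => /andP[? ?] /andP[? ?] /andP[? ?]; apply/andP; lra.
have gc (a b : R) : `|a| <= `|s| -> `|b| <= `|s| -> {within `[a, b], continuous g}.
  move=> sa sb; apply: continuous_in_subspaceT => r.
  rewrite inE /= in_itv /= => /(inside _ _ _ sa sb) /gd [/derivable1_diffP gr _].
  exact: differentiable_continuous.
have mvt (a b : R) : a <= b -> `|a| <= `|s| -> `|b| <= `|s| ->
    exists2 c, `|c| <= `|s| & g b - g a = dg c * (b - a).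
  move=> ab sa sb; have [|c] := @MVT_segment R g dg a b ab _ (gc a b sa sb).
    move=> r; rewrite in_itv /= => /andP[ar rb]; apply: gd.
    by apply: (inside a b) => //; rewrite !ltW.
  by rewrite in_itv /= => /(inside _ _ _ sa sb) cs ->; exists c.
have g0 : g 0 = Phi w by rewrite /g scale0r addr0.
have s0 : `|0 : R| <= `|s| by rewrite normr0.
case: (leP 0 s) => [s_ge0 | s_lt0].
  have [c cs E] := mvt _ _ s_ge0 s0 (lexx _).
  by exists c; rewrite // -g0 E subr0 mulrC.
have [c cs E] := mvt _ _ (ltW s_lt0) (lexx _) s0.
by exists c; rewrite // -g0 -[LHS]opprB E sub0r mulrN opprK mulrC.
Qed.

Definition linearization_error y z :=
  Phi z - Phi y - \sum_a (z - y) 0 a * 'D_(e a) Phi y.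

Lemma linearization_error_le {y} {eps delta : R} :
  (forall z a, `|z - y| < delta -> derivable Phi z (e a)) ->
  (forall z a, `|z - y| < delta -> `|'D_(e a) Phi z - 'D_(e a) Phi y| <= eps) ->
  forall z, `|z - y| < delta ->
  `|linearization_error y z| <= eps * \sum_a `|(z - y) 0 a|.
Proof.
move=> dPhi cPhi z zy; set d := z - y.
(* Telescope along y, y + d_0 e_0, y + d_0 e_0 + d_1 e_1, ..., applying mvt_line on
   each segment. *)
pose S j (F : 'I_m -> R) := \sum_(k < m | (k < j)%N) F k.
suff prefix_bound j : (j <= m)%N ->
    `|Phi (y + coord_prefix d j) - Phi y - S j (fun k => d 0 k * 'D_(e k) Phi y)|
      <= eps * S j (fun k => `|d 0 k|).
  have := prefix_bound m (leqnn m).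
  rewrite coord_prefix_full /d (addrC y) subrK /S /linearization_error.
  by rewrite !(eq_bigl _ _ (fun k => ltn_ord k)).
elim: j => [_|j IH jm].
  by rewrite /S /coord_prefix !big_pred0 // addr0 subrr subr0 normr0 mulr0.
pose k := Ordinal jm.
have near_y r : `|r| <= `|d 0 k| -> `|y + coord_prefix d k + r *: e k - y| < delta.
  move=> rk; rewrite addrAC (addrC y) addrK.
  by apply: le_lt_trans zy; exact: normr_coord_prefix_shift_le.
have [c ck E] := mvt_line (fun r rk => dPhi _ k (near_y r rk)).
have := IH (ltnW jm); rewrite /S.
change j.+1 with k.+1; change j with (nat_of_ord k).
rewrite !sumr_ord_ltS coord_prefixS addrA.
set A := Phi _ - _ - _ => IHk.
have -> : Phi (y + coord_prefix d k + d 0 k *: e k) - Phi y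
    - (\sum_(i < m | (i < k)%N) d 0 i * 'D_(e i) Phi y + d 0 k * 'D_(e k) Phi y)
    = A + d 0 k * ('D_(e k) Phi (y + coord_prefix d k + c *: e k) - 'D_(e k) Phi y).
  by rewrite /A -[Phi (_ + d 0 k *: _)](subrK (Phi (y + coord_prefix d k))) E; ring.
rewrite [eps * _]mulrDr; apply: le_trans (ler_normD _ _) _; apply: lerD => //.
by rewrite normrM mulrC ler_wpM2r // cPhi // near_y.
Qed.

Section OpenDomain.
Variable O : set vec.
Hypothesis O_open : open O.
Hypothesis dPhi : forall z a, O z -> derivable Phi z (e a).
Hypothesis cPhi : forall a, {in O, continuous ('D_(e a) Phi)}.

Lemma linearization_error_small {y eps} : O y -> 0 < eps -> exists2 delta, 0 < delta &
    forall z, `|z - y| < delta -> `|linearization_error y z| <= eps * `|z - y|.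
Proof.
move=> Oy eps0.
pose eps' := eps / (m%:R + 1).
have eps'0 : 0 < eps' by rewrite divr_gt0 // ltr_wpDl.
have : \forall z \near y, O z /\ forall a, `|'D_(e a) Phi z - 'D_(e a) Phi y| <= eps'.
  near=> z; split; first by near: z; exact: open_nbhs_nbhs.
  near: z; apply: filter_forall => a.
  move/cvgrPdist_le: (cPhi a y (mem_set Oy)) => /(_ eps' eps'0).
  by apply: filterS => z; rewrite distrC.
move=> /nbhs_ballP [delta /= delta0 ball_y]; exists delta => // z zy.
have in_ball w : `|w - y| < delta ->
    O w /\ forall a, `|'D_(e a) Phi w - 'D_(e a) Phi y| <= eps'.
  by move=> wy; apply: ball_y; rewrite -ball_normE /ball_ /= distrC.
apply: le_trans (linearization_error_le (fun w a wy => dPhi w a (in_ball w wy).1)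
  (fun w a wy => (in_ball w wy).2 a) _ zy) _.
apply: le_trans (ler_wpM2l (ltW eps'0) (sum_normr_entries_le _)) _.
rewrite mulrA ler_wpM2r // /eps' -mulrA ler_piMr ?ltW //.
by rewrite mulrC ltr_pdivrMr ?mul1r ?ltrDl // ltr_wpDl.
Unshelve. all: by end_near.
Qed.

Lemma is_derive_comp_partials (x : R -> vec) t : O (x t) -> derivable x t 1 ->
  is_derive t 1 (Phi \o x) (\sum_a 'D_1 x t 0 a * 'D_(e a) Phi (x t)).
Proof.
move=> Oy dx; set y := x t.
pose rem s := linearization_error y (x s).
have rem0 : is_derive t 1 rem 0.
  apply: is_derive0_of_small_increments => eps eps0.
  pose C := `|'D_1 x t| + 1.
  have C0 : 0 < C by rewrite ltr_wpDl.
  have [delta delta0 small] := linearization_error_small Oy (divr_gt0 eps0 C0).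
  near=> h.
  have xh : `|x (h + t) - y| <= C * `|h| by near: h; exact: increment_le_near.
  have hd : `|h| < delta / C by near: h; apply: dnbhs0_lt; exact: divr_gt0.
  have rem_t : rem t = 0.
    rewrite /rem /linearization_error -/y !subrr sub0r big1 ?oppr0 // => a _.
    by rewrite mxE mul0r.
  rewrite rem_t subr0.
  apply: le_trans (small _ _) _.
    by apply: le_lt_trans xh _; rewrite mulrC -ltr_pdivlMr.
  apply: le_trans (ler_wpM2l _ xh) _; first by rewrite divr_ge0 ?ltW.
  by rewrite mulrA divfK ?gt_eqF.
pose lin a := ((fun s => x s 0 a) - cst (y 0 a)) * cst ('D_(e a) Phi y).
have lin_d a : is_derive t 1 (lin a) ('D_1 x t 0 a * 'D_(e a) Phi y).
  apply: is_derive_eq; first exact: is_deriveM (is_deriveB (is_derive_entry 0 a dx)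
    (is_derive_cst _ _ _)) (is_derive_cst _ _ _).
  by rewrite scaler0 add0r subr0 mulrC.
have -> : Phi \o x = rem + cst (Phi y) + \sum_a lin a.
  apply/funext => s; rewrite /rem /linearization_error /= fct_sumE !fctE /lin.
  under eq_bigr do rewrite !mxE; under [X in _ = _ + X]eq_bigr do rewrite !fctE.
  by rewrite addrAC !subrK.
have := is_deriveD (is_deriveD rem0 (is_derive_cst (Phi y) t 1)) (is_derive_sum lin_d).
by rewrite !add0r.
Unshelve. all: by end_near.
Qed.
End OpenDomain.
End Linearization.
End RowCalculus.

Arguments is_derive_comp_partials {R m Phi O} O_open dPhi cPhi {x t}.

(* Multiplying (ID) by theta''_a xdot_a and summing: the two multiplier terms A and B
   drop out because sum_a xdot_a = 0. *)
Lemma power_balance {F : numFieldType} {m : nat} {v w c c' acc : 'I_m -> F} {A B eta : F} :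
  (forall a, c a != 0) -> \sum_a v a = 0 ->
  (forall a, acc a = (c a)^-1 * (w a - A)
                     - (2 * c a)^-1 * (c' a * v a ^+ 2 - B) - eta * v a) ->
  \sum_a v a * (c a * acc a + 2^-1 * (c' a * v a ^+ 2))
    = \sum_a v a * w a - eta * \sum_a c a * v a ^+ 2.
Proof.
move=> c0 v0 accE.
rewrite (eq_bigr (fun a => (v a * w a - eta * (c a * v a ^+ 2)) + (2^-1 * B - A) * v a)).
  by rewrite big_split /= -mulr_sumr v0 mulr0 addr0 sumrB mulr_sumr.
by move=> a _; rewrite accE; field; rewrite c0.
Qed.

Section InertialDynamics.
Variables (R : realType) (n : nat).
Notation vec := 'rV[R]_(n.+1).
Variables (theta : R -> R) (Phi : vec -> R) (O : set vec) (eta : R) (x : R -> vec).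
Hypothesis theta_smooth : forall k u, 0 < u -> derivable (dern k theta) u 1.
Hypothesis theta2_gt0 : forall u, 0 < u -> 0 < dern 2 theta u.
Hypothesis theta3_lt0 : forall u, 0 < u -> dern 3 theta u < 0.
Hypothesis O_open : open O.
Hypothesis simplex_sub : @simplex R n `<=` O.
Hypothesis Phi_smooth : Smooth_on_set O Phi.
Hypothesis Phi_lipschitz : Lipschitz_on_set O Phi.
Hypothesis eta_gt0 : 0 < eta.
Hypothesis x_sol : interior_ID_solution theta Phi eta x.

Local Notation th2 := (dern 2 theta).
Local Notation th3 := (dern 3 theta).
Local Notation xd := (derive1 x).

Lemma is_derive_theta2 (u : R) : 0 < u -> is_derive u 1 th2 (th3 u).
Proof. by move=> u0; split; [exact: theta_smooth | rewrite -derive1E]. Qed.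

Lemma theta2_ge_theta2_1 (u : R) : 0 < u -> u <= 1 -> th2 1 <= th2 u.
Proof.
move=> u0 u1; apply: (ler0_is_derive_le (df := th3) u1) => v /andP[uv _].
  by apply: is_derive_theta2; exact: lt_le_trans uv.
by apply/ltW/theta3_lt0; exact: lt_trans uv.
Qed.

Lemma sol_entry_gt0 (t : R) a : 0 <= t -> 0 < x t 0 a.
Proof. by move=> t0; case: (x_sol.1 t t0). Qed.

Lemma sol_entry_le1 (t : R) a : 0 <= t -> x t 0 a <= 1.
Proof.
move=> t0; rewrite -(x_sol.1 t t0).2 (bigD1 a) //= lerDl.
by apply: sumr_ge0 => b _; exact/ltW/sol_entry_gt0.
Qed.

Lemma sol_in_O (t : R) : 0 <= t -> O (x t).
Proof.
move=> t0; apply: simplex_sub; split; last exact: (x_sol.1 t t0).2.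
by move=> a; exact/ltW/sol_entry_gt0.
Qed.

Lemma sol_dist_le1 (s t : R) : 0 <= s -> 0 <= t -> `|x t - x s| <= 1.
Proof.
move=> s0 t0; apply: mx_normr_le => // a; rewrite !mxE ler_norml.
have := sol_entry_gt0 s a s0; have := sol_entry_gt0 t a t0.
have := sol_entry_le1 s a s0; have := sol_entry_le1 t a t0.
move=> *; apply/andP; split; lra.
Qed.

Lemma partials_derivable z a : O z -> derivable Phi z (delta_mx 0 a).
Proof. exact: Phi_smooth.1 [::] a z. Qed.

Lemma partials_continuous a : {in O, continuous ('D_(delta_mx 0 a) Phi)}.
Proof. by rewrite -continuous_open_subspace //; exact: (Phi_smooth.2 [:: a]). Qed.

Lemma sum_sol_velocity (t : R) : 0 < t -> \sum_a xd t 0 a = 0.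
Proof.
move=> t0.
have dsum : is_derive t 1 (\sum_a (fun s => x s 0 a)) (\sum_a xd t 0 a).
  by apply: is_derive_sum => a; rewrite derive1E; exact: is_derive_entry (x_sol.2.1 t t0).
have dcst : is_derive t 1 (\sum_a (fun s => x s 0 a)) 0.
  apply: (near_eq_is_derive _ (is_derive_cst (1 : R) t 1)).
  near=> s; rewrite fct_sumE; apply/esym; apply: (x_sol.1 s _).2.
  by near: s; exact: lt_le_nbhsr.
by case: dsum => _ <-; case: dcst.
Unshelve. all: by end_near.
Qed.

Definition speed2 (t : R) := \sum_a th2 (x t 0 a) * xd t 0 a ^+ 2.

Definition energy (t : R) := 2^-1 * speed2 t - Phi (x t).

Lemma energy_is_derive (t : R) : 0 < t -> is_derive t 1 energy (- eta * speed2 t).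
Proof.
move=> t0; have [_ [dx [ddx IDeq]]] := x_sol.
have dxa a : is_derive t 1 (fun s => x s 0 a) (xd t 0 a).
  by rewrite derive1E; exact: is_derive_entry (dx t t0).
have dva a : is_derive t 1 (fun s => xd s 0 a) (derive1 xd t 0 a).
  by rewrite [derive1 xd t]derive1E; exact: is_derive_entry (ddx t t0).
have dkin a : is_derive t 1 (fun s => th2 (x s 0 a) * xd s 0 a ^+ 2)
    (2 * (xd t 0 a * (th2 (x t 0 a) * derive1 xd t 0 a
                      + 2^-1 * (th3 (x t 0 a) * xd t 0 a ^+ 2)))).
  have h1 := is_derive1_comp (is_derive_theta2 _ (sol_entry_gt0 t a (ltW t0))) (dxa a).
  have h2 := is_deriveX 2 (dva a).
  move: (is_deriveM h1 h2) => /is_derive_eq; apply.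
  have expand (p q v w : R) : p * (2 * v * w) + v ^+ 2 * (q * v)
      = 2 * (v * (p * w + 2^-1 * (q * v ^+ 2))) by field.
  by rewrite /= !fctE expr1 /GRing.scale /=; exact: expand.
have dPhi := is_derive_comp_partials O_open partials_derivable partials_continuous
  (sol_in_O t (ltW t0)) (dx t t0).
have -> : energy = 2^-1 \*: \sum_a (fun s => th2 (x s 0 a) * xd s 0 a ^+ 2) - (Phi \o x).
  by apply/funext => s; rewrite /energy /speed2 !fctE fct_sumE.
move: (is_deriveB (is_deriveZ 2^-1 (is_derive_sum dkin)) dPhi) => /is_derive_eq; apply.
rewrite -mulr_sumr /GRing.scale /= mulrA mulVf ?pnatr_eq0 // mul1r -derive1E.
have th2_neq0 a : th2 (x t 0 a) != 0 by exact/lt0r_neq0/theta2_gt0/sol_entry_gt0/ltW.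
rewrite (power_balance th2_neq0 (sum_sol_velocity t t0) (fun a => IDeq t a t0)).
by rewrite /coord_partial addrAC subrr add0r mulNr.
Qed.

Lemma speed2_ge0 (t : R) : 0 <= t -> 0 <= speed2 t.
Proof.
move=> t0; apply: sumr_ge0 => a _.
by rewrite mulr_ge0 ?sqr_ge0 // ltW // theta2_gt0 // sol_entry_gt0.
Qed.

Lemma energy_nonincreasing {s t : R} : 0 < s -> s <= t -> energy t <= energy s.
Proof.
move=> s0 st; apply: (ler0_is_derive_le st) => u /andP[su _].
  by apply: energy_is_derive; exact: lt_le_trans su.
have u0 : 0 < u := lt_trans s0 su.
by rewrite /= mulNr oppr_le0 mulr_ge0 ?speed2_ge0 ?ltW.
Qed.

Lemma energy_lbounded : exists B, forall t : R, 0 <= t -> B <= energy t.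
Proof.
have [L PhiL] := Phi_lipschitz.
exists (- (`|Phi (x 0)| + `|L|)) => t t0.
have O0 := sol_in_O 0 (lexx 0).
have PhiB : Phi (x t) <= `|Phi (x 0)| + `|L|.
  have := PhiL _ _ (sol_in_O t t0) O0; rewrite ler_norml => /andP[_ hPhi].
  have : L * `|x t - x 0| <= `|L|.
    apply: le_trans (ler_wpM2r (normr_ge0 _) (ler_norm L)) _.
    by rewrite ler_piMr // sol_dist_le1.
  have := ler_norm (Phi (x 0)); lra.
have := speed2_ge0 t t0; rewrite /energy; lra.
Qed.

Lemma sol_entry_increment_le a {tau s t : R} : 0 < tau -> 0 < s -> s <= t ->
  (x t 0 a - x s 0 a) ^+ 2
    <= tau / (eta * th2 1) * (energy s - energy t) + (t - s) / tau.
Proof.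
move=> tau0 s0 st.
have [_ [dx _]] := x_sol.
have pos u : s <= u -> 0 < u by move=> su; exact: lt_le_trans su.
apply: (sqr_increment_le (f := fun u => x u 0 a) (df := fun u => xd u 0 a)
  (dg := fun u => - eta * speed2 u) _ tau0 st).
- by rewrite mulr_gt0 // theta2_gt0.
- move=> u /andP[su _]; rewrite derive1E; exact: is_derive_entry (dx u (pos u su)).
- move=> u /andP[su _]; exact: energy_is_derive (pos u su).
- move=> u /andP[/ltW su _]; have u0 := pos u su.
  have th2_ge0 b : 0 <= th2 (x u 0 b) by rewrite ltW ?theta2_gt0 ?sol_entry_gt0 ?ltW.
  rewrite mulNr opprK -mulrA ler_pM2l // /speed2 (bigD1 a) //.
  apply: ler_wpDr; first by apply: sumr_ge0 => b _; rewrite mulr_ge0 ?sqr_ge0.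
  by rewrite ler_wpM2r ?sqr_ge0 ?theta2_ge_theta2_1 ?sol_entry_gt0 ?sol_entry_le1 ?ltW.
- move=> u /andP[/ltW su _].
  rewrite -[_ ^+ 2]ger0_norm ?sqr_ge0 // normrX exprn_ile1 //.
  have := mx_normr_entry_le (x u - x s) a; rewrite !mxE => /le_trans; apply.
  exact: sol_dist_le1 (ltW s0) (ltW (pos u su)).
Qed.

Lemma sol_eventually_slow {eps T : R} : 0 < eps -> 0 < T ->
  exists2 S, 1 <= S & forall s t, S <= s -> s <= t <= s + T -> `|x t - x s| <= eps.
Proof.
move=> eps0 T0.
have c0 : 0 < eta * th2 1 by rewrite mulr_gt0 // theta2_gt0.
(* tau and gam make both terms of sol_entry_increment_le at most eps^2 / 2. *)
pose tau := 2 * T / eps ^+ 2.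
have tau0 : 0 < tau by rewrite divr_gt0 ?mulr_gt0 ?exprn_gt0 //.
pose gam := eps ^+ 2 * (eta * th2 1) / (2 * tau).
have gam0 : 0 < gam by apply: divr_gt0; rewrite mulr_gt0 ?exprn_gt0.
have [B EB] := energy_lbounded.
have [S S1 flat] := nonincreasing_lbounded_cauchy (a := 1) (B := B)
  (fun s t s1 st => energy_nonincreasing (lt_le_trans ltr01 s1) st)
  (fun t t1 => EB t (le_trans ler01 t1)) _ gam0.
exists S => // s t Ss /andP[st tsT].
have s0 : 0 < s := lt_le_trans ltr01 (le_trans S1 Ss).
apply: mx_normr_le => [|a]; first exact: ltW.
have Ebound : tau / (eta * th2 1) * (energy s - energy t) <= eps ^+ 2 / 2.
  apply: le_trans (ler_wpM2l _ (flat s t Ss st)) _; first by rewrite divr_ge0 ?ltW.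
  suff -> : tau / (eta * th2 1) * gam = eps ^+ 2 / 2 by [].
  by rewrite /gam; field; rewrite !lt0r_neq0 ?theta2_gt0.
have tbound : (t - s) / tau <= eps ^+ 2 / 2.
  apply: le_trans (_ : T / tau <= _); first by apply: ler_wpM2r; [rewrite invr_ge0 ltW | lra].
  suff -> : T / tau = eps ^+ 2 / 2 by [].
  by rewrite /tau; field; rewrite !lt0r_neq0.
have := sol_entry_increment_le a tau0 s0 st; rewrite !mxE => hsq.
rewrite ler_norml; apply/andP; split; nra.
Qed.

Lemma omega_limit_long_visits xw (eps T : R) :
  omega_limit_point x xw -> 0 < eps -> 0 < T ->
  exists a b, [/\ 0 <= a, T <= b - a & forall t, a <= t <= b -> `|xw - x t| < eps].
Proof.
move=> [tn [tn_oo xtn]] eps0 T0.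
have eps20 : 0 < eps / 2 by rewrite divr_gt0.
have [S S1 slow] := sol_eventually_slow eps20 T0.
have [s [Ss xs]] : exists s, S <= s /\ `|xw - x s| < eps / 2.
  have : \forall k \near \oo, S <= tn k /\ `|xw - x (tn k)| < eps / 2.
    near=> k; split; near: k; first by move/cvgryPge: tn_oo; apply.
    by move/cvgrPdist_lt: xtn; apply.
  by case=> N _ HN; exists (tn N); apply: HN => /=.
exists s, (s + T); split => [||t sts]; [lra | lra |].
have := slow s t Ss sts.
have -> : xw - x t = (xw - x s) + (x s - x t) by rewrite addrA subrK.
move: (ler_normD (xw - x s) (x s - x t)); rewrite (distrC (x s)); lra.
Unshelve. all: by end_near.
Qed.
End InertialDynamics.

Arguments omega_limit_long_visits {R n theta Phi O eta x}.

Theorem lemma4p3 (R : realType) (n : nat) (hn : (1 <= n)%N)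
  (theta : R -> R) (theta0 : \bar R) (Phi : 'rV[R]_(n.+1) -> R)
  (O : set 'rV[R]_(n.+1)) (eta : R) (x : R -> 'rV[R]_(n.+1))
  (xw : 'rV[R]_(n.+1)) (U : set 'rV[R]_(n.+1)) :
  is_kernel theta theta0 ->
  open O -> @simplex R n `<=` O -> Smooth_on_set O Phi -> Lipschitz_on_set O Phi ->
  0 < eta ->
  interior_ID_solution theta Phi eta x ->
  omega_limit_point x xw ->
  nbhs_in_simplex xw U ->
  forall T : R, 0 < T ->
  exists a b : R, [/\ 0 <= a, T <= b - a &
                      forall t, a <= t <= b -> U (x t)].
Proof.
move=> [_ theta_smooth _ _ [theta2_gt0 theta3_lt0]] O_open simplex_sub Phi_smooth
  Phi_lipschitz eta_gt0 x_sol x_omega [V [V_nbhs V_U]] T T_gt0.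
move/nbhs_ballP: V_nbhs => -[eps /= eps_gt0 ball_V].
have [a [b [a_ge0 abT near_xw]]] := omega_limit_long_visits theta_smooth theta2_gt0
  theta3_lt0 O_open simplex_sub Phi_smooth Phi_lipschitz eta_gt0 x_sol xw eps T
  x_omega eps_gt0 T_gt0.
exists a, b; split => // t abt; apply: V_U; split.
  by apply: ball_V; rewrite -ball_normE; exact: near_xw.
have [x_pos x_sum] := x_sol.1 t (le_trans a_ge0 (andP abt).1).
by split => // i; exact: ltW.
Qed.
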